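(* Let $\Omega=(0,l_x)\times(0,l_y)\times(0,l_z)$ be discretized by cubic cells of side $h=l_x/N_x=l_y/N_y=l_z/N_z$ with cell centers $(x_i,y_j,z_k)=((i-\tfrac12)h,(j-\tfrac12)h,(k-\tfrac12)h)$, $1\le i\le N_x$, $1\le j\le N_y$, $1\le k\le N_z$. Let $\epsilon>0$, $S>0$, $\Delta t>0$, $F(\phi)=\frac14(\phi^2-1)^2$, and let $g_{ijk}\ge 0$ be given grid values (in the paper $g_{ijk}=g(\mathbf{x}_{ijk})$ with $g=1-\phi_0^2+\lambda\ge\lambda>0$). Let $n\ge1$ and let grid functions $\phi^{n-1},\phi^n$ be given; set $\phi^*=\frac32\phi^n-\frac12\phi^{n-1}$. Suppose grid functions $\phi^{n+1},\mu^{n+\frac12}$ and a real number $Q^{n+\frac12}$ satisfy, for all $i,j,k$, $$\frac{\phi^{n+1}_{ijk}-\phi^n_{ijk}}{\Delta t}=-g_{ijk}\mu^{n+\frac12}_{ijk},$$ $$\mu^{n+\frac12}_{ijk}=Q^{n+\frac12}\frac{F'(\phi^*_{ijk})}{\epsilon^2}-\Delta_d\Big(\frac{\phi^{n+1}_{ijk}+\phi^n_{ijk}}{2}\Big)+S\Big(\frac{\phi^{n+1}_{ijk}+\phi^n_{ijk}}{2}-\phi^*_{ijk}\Big),$$ $$\big(F(\phi^{n+1})-F(\phi^n),\mathbf{1}\big)_h=Q^{n+\frac12}\big(F'(\phi^* ),\phi^{n+1}-\phi^n\big)_h,$$ where all grid functions satisfy the discrete homogeneous Neumann conditions described in the context.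 Then $$\frac{1}{\epsilon^2}\big(F(\phi^{n+1})-F(\phi^n),\mathbf{1}\big)_h+\frac12\big(\|\nabla_d\phi^{n+1}\|_e^2-\|\nabla_d\phi^n\|_e^2\big)+\frac S4\big(\|\phi^{n+1}-\phi^n\|_h^2-\|\phi^n-\phi^{n-1}\|_h^2\big)$$ $$=-\Delta t\,\|\sqrt{g}\,\mu^{n+\frac12}\|_h^2-\frac S4\|\phi^{n+1}-2\phi^n+\phi^{n-1}\|_h^2\le 0,$$ and consequently the discrete energy $$\tilde E(\phi^{n+1},\phi^n):=\frac{1}{\epsilon^2}\big(F(\phi^{n+1}),\mathbf{1}\big)_h+\frac12\|\nabla_d\phi^{n+1}\|_e^2+\frac S4\|\phi^{n+1}-\phi^n\|_h^2$$ satisfies $\tilde E(\phi^{n+1},\phi^n)\le\tilde E(\phi^n,\phi^{n-1})$ (unconditional energy stability, for any $\Delta t>0$).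
   Context: Discrete Neumann conditions (ghost values): $\phi_{0,jk}=\phi_{1,jk}$, $\phi_{N_x+1,jk}=\phi_{N_x,jk}$, $\phi_{i,0,k}=\phi_{i,1,k}$, $\phi_{i,N_y+1,k}=\phi_{i,N_y,k}$, $\phi_{ij,0}=\phi_{ij,1}$, $\phi_{ij,N_z+1}=\phi_{ij,N_z}$, and likewise for $\mu$. The discrete Laplacian is $\Delta_d\phi_{ijk}=(\phi_{i+1,jk}+\phi_{i-1,jk}+\phi_{i,j+1,k}+\phi_{i,j-1,k}+\phi_{ij,k+1}+\phi_{ij,k-1}-6\phi_{ijk})/h^2$. Inner products: $(\phi,\psi)_h=h^3\sum_{i=1}^{N_x}\sum_{j=1}^{N_y}\sum_{k=1}^{N_z}\phi_{ijk}\psi_{ijk}$, $\|\phi\|_h^2=(\phi,\phi)_h$, $\mathbf{1}$ is the grid function identically $1$, and $\sqrt{g}\mu$ denotes the grid function $\sqrt{g_{ijk}}\mu_{ijk}$. With $D_x\phi_{i+\frac12,jk}=(\phi_{i+1,jk}-\phi_{ijk})/h$ and analogously $D_y,D_z$, $(\nabla_d\phi,\nabla_d\psi)_e=h^3\big(\sum_{i=0}^{N_x}\sum_{j=1}^{N_y}\sum_{k=1}^{N_z}D_x\phi_{i+\frac12,jk}D_x\psi_{i+\frac12,jk}+\sum_{i=1}^{N_x}\sum_{j=0}^{N_y}\sum_{k=1}^{N_z}D_y\phi_{i,j+\frac12,k}D_y\psi_{i,j+\frac12,k}+\sum_{i=1}^{N_x}\sum_{j=1}^{N_y}\sum_{k=0}^{N_z}D_z\phi_{ij,k+\frac12}D_z\psi_{ij,k+\frac12}\big)$,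 and $\|\nabla_d\phi\|_e^2=(\nabla_d\phi,\nabla_d\phi)_e$. *)

From HB Require Import structures.
From mathcomp Require Import all_boot all_order all_algebra.
Set Implicit Arguments. Unset Strict Implicit. Unset Printing Implicit Defensive.
Import Order.TTheory GRing.Theory Num.Theory.
Local Open Scope ring_scope.

(* A grid function: values phi i j k, with interior indices 1..N and
   ghost indices 0 and N+1 (other indices are irrelevant). *)
Definition gridfun (R : Type) := nat -> nat -> nat -> R.

Section Grid.
Variable R : rcfType.
Variables (Nx Ny Nz : nat) (h : R).

Definition neumann (phi : gridfun R) : Prop :=
  (forall j k, (1 <= j <= Ny)%N -> (1 <= k <= Nz)%N ->
     phi 0%N j k = phi 1%N j k /\ phi Nx.+1 j k = phi Nx j k) /\
  (forall i k, (1 <= i <= Nx)%N -> (1 <= k <= Nz)%N ->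
     phi i 0%N k = phi i 1%N k /\ phi i Ny.+1 k = phi i Ny k) /\
  (forall i j, (1 <= i <= Nx)%N -> (1 <= j <= Ny)%N ->
     phi i j 0%N = phi i j 1%N /\ phi i j Nz.+1 = phi i j Nz).

Definition lapd (phi : gridfun R) (i j k : nat) : R :=
  (phi i.+1 j k + phi i.-1 j k + phi i j.+1 k + phi i j.-1 k
   + phi i j k.+1 + phi i j k.-1 - 6%:R * phi i j k) / h ^+ 2.

Definition iph (phi psi : gridfun R) : R :=
  h ^+ 3 * \sum_(1 <= i < Nx.+1) \sum_(1 <= j < Ny.+1) \sum_(1 <= k < Nz.+1)
    phi i j k * psi i j k.

Definition normh2 (phi : gridfun R) : R := iph phi phi.

(* Difference quotients on faces: D_x phi_{i+1/2,jk} indexed by i, etc. *)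
Definition Dx (phi : gridfun R) i j k : R := (phi i.+1 j k - phi i j k) / h.
Definition Dy (phi : gridfun R) i j k : R := (phi i j.+1 k - phi i j k) / h.
Definition Dz (phi : gridfun R) i j k : R := (phi i j k.+1 - phi i j k) / h.

Definition ipe (phi psi : gridfun R) : R :=
  h ^+ 3 * (
    \sum_(0 <= i < Nx.+1) \sum_(1 <= j < Ny.+1) \sum_(1 <= k < Nz.+1)
      Dx phi i j k * Dx psi i j k
  + \sum_(1 <= i < Nx.+1) \sum_(0 <= j < Ny.+1) \sum_(1 <= k < Nz.+1)
      Dy phi i j k * Dy psi i j k
  + \sum_(1 <= i < Nx.+1) \sum_(1 <= j < Ny.+1) \sum_(0 <= k < Nz.+1)
      Dz phi i j k * Dz psi i j k).

Definition normgrad2 (phi : gridfun R) : R := ipe phi phi.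

End Grid.

Definition Fdw (R : rcfType) (x : R) : R := (x ^+ 2 - 1) ^+ 2 / 4%:R.
Definition dFdw (R : rcfType) (x : R) : R := x ^+ 3 - x.

Definition one_grid (R : rcfType) : gridfun R := fun _ _ _ => 1.

Definition Etilde (R : rcfType) (Nx Ny Nz : nat) (h eps S : R)
  (phi1 phi0 : gridfun R) : R :=
  iph Nx Ny Nz h (fun i j k => Fdw (phi1 i j k)) (one_grid R) / eps ^+ 2
  + normgrad2 Nx Ny Nz h phi1 / 2%:R
  + S / 4%:R * normh2 Nx Ny Nz h (fun i j k => phi1 i j k - phi0 i j k).

From HB Require Import structures.
From mathcomp Require Import all_boot all_order all_algebra.
From mathcomp Require Import ring.
Set Implicit Arguments. Unset Strict Implicit. Unset Printing Implicit Defensive.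
Import Order.TTheory GRing.Theory Num.Theory.
Local Open Scope ring_scope.

(* Test the chemical-potential equation with phi^{n+1} - phi^n.  The mobility
   equation turns the left-hand side into -dt ||sqrt g mu||^2.  On the right,
   the constraint defining Q turns the F'-term into the increment of the bulk
   energy, summation by parts (the Neumann ghost values kill the boundary terms)
   turns the Laplacian term into the increment of ||grad phi||^2 / 2, and the
   stabilizer term splits into the increment of S/4 ||phi^{k+1} - phi^k||^2 plus
   the nonnegative second difference S/4 ||phi^{n+1} - 2 phi^n + phi^{n-1}||^2. *)

Lemma discrete_green (R : comPzRingType) (N : nat) (u v : nat -> R) :
  \sum_(1 <= i < N.+1) (u i.+1 + u i.-1 - 2%:R * u i) * v i =
  (u N.+1 - u N) * v N.+1 - (u 1%N - u 0%N) * v 0%N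
  - \sum_(0 <= i < N.+1) (u i.+1 - u i) * (v i.+1 - v i).
Proof.
elim: N => [|N IH]; first by rewrite big_geq // big_nat1; ring.
by rewrite big_nat_recr //= IH [in RHS]big_nat_recr //=; ring.
Qed.

Lemma sum_by_parts_neumann (R : comPzRingType) (N : nat) (u v : nat -> R) :
  u 0%N = u 1%N -> u N.+1 = u N ->
  \sum_(1 <= i < N.+1) (u i.+1 + u i.-1 - 2%:R * u i) * v i =
  - \sum_(0 <= i < N.+1) (u i.+1 - u i) * (v i.+1 - v i).
Proof. by move=> u01 uN; rewrite discrete_green u01 uN !subrr !mul0r subrr sub0r. Qed.

Section BoxSum.
Variables (R : comPzRingType) (Nx Ny Nz : nat).

Definition box_sum (a b c : nat) (f : gridfun R) : R :=
  \sum_(a <= i < Nx.+1) \sum_(b <= j < Ny.+1) \sum_(c <= k < Nz.+1) f i j k.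

Lemma eq_box_sum a b c (f f' : gridfun R) :
  (forall i j k, (a <= i < Nx.+1)%N -> (b <= j < Ny.+1)%N -> (c <= k < Nz.+1)%N ->
     f i j k = f' i j k) ->
  box_sum a b c f = box_sum a b c f'.
Proof.
move=> ff'; apply: eq_big_nat => i ib; apply: eq_big_nat => j jb.
by apply: eq_big_nat => k kb; apply: ff'.
Qed.

Lemma box_sumD a b c (f f' : gridfun R) :
  box_sum a b c (fun i j k => f i j k + f' i j k) = box_sum a b c f + box_sum a b c f'.
Proof.
rewrite /box_sum -big_split; apply: eq_bigr => i _.
by rewrite -big_split; apply: eq_bigr => j _; rewrite -big_split.
Qed.

Lemma box_sumZ a b c (x : R) (f : gridfun R) :
  box_sum a b c (fun i j k => x * f i j k) = x * box_sum a b c f.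
Proof.
rewrite /box_sum mulr_sumr; apply: eq_bigr => i _.
by rewrite mulr_sumr; apply: eq_bigr => j _; rewrite mulr_sumr.
Qed.

Lemma box_sumB a b c (f f' : gridfun R) :
  box_sum a b c (fun i j k => f i j k - f' i j k) = box_sum a b c f - box_sum a b c f'.
Proof.
rewrite -mulN1r -box_sumZ -box_sumD.
by apply: eq_box_sum => i j k _ _ _; rewrite mulN1r.
Qed.

Lemma box_sum_xlast a b c (f : gridfun R) :
  box_sum a b c f =
  \sum_(b <= j < Ny.+1) \sum_(c <= k < Nz.+1) \sum_(a <= i < Nx.+1) f i j k.
Proof. by rewrite /box_sum exchange_big; apply: eq_bigr => j _; rewrite exchange_big. Qed.

Lemma box_sum_ylast a b c (f : gridfun R) :
  box_sum a b c f =
  \sum_(a <= i < Nx.+1) \sum_(c <= k < Nz.+1) \sum_(b <= j < Ny.+1) f i j k.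
Proof. by apply: eq_bigr => i _; rewrite exchange_big. Qed.

End BoxSum.

Section GridCalculus.
Variables (R : rcfType) (Nx Ny Nz : nat) (h : R).

Lemma neumann_avg (p q : gridfun R) :
  neumann Nx Ny Nz p -> neumann Nx Ny Nz q ->
  neumann Nx Ny Nz (fun a b c => (p a b c + q a b c) / 2%:R).
Proof.
move=> [px [py pz]] [qx [qy qz]]; split; [|split] => a b ab bb.
- by have [-> ->] := px a b ab bb; have [-> ->] := qx a b ab bb.
- by have [-> ->] := py a b ab bb; have [-> ->] := qy a b ab bb.
- by have [-> ->] := pz a b ab bb; have [-> ->] := qz a b ab bb.
Qed.

Lemma box_sum_by_parts_x (u v : gridfun R) : neumann Nx Ny Nz u ->
  box_sum Nx Ny Nz 1 1 1 (fun i j k => (u i.+1 j k + u i.-1 j k - 2%:R * u i j k) * v i j k)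
  = - box_sum Nx Ny Nz 0 1 1 (fun i j k => (u i.+1 j k - u i j k) * (v i.+1 j k - v i j k)).
Proof.
move=> [ux _]; rewrite !box_sum_xlast -sumrN; apply: eq_big_nat => j jb.
rewrite -sumrN; apply: eq_big_nat => k kb; have [u0 uN] := ux j k jb kb.
exact: (sum_by_parts_neumann (fun i => v i j k) u0 uN).
Qed.

Lemma box_sum_by_parts_y (u v : gridfun R) : neumann Nx Ny Nz u ->
  box_sum Nx Ny Nz 1 1 1 (fun i j k => (u i j.+1 k + u i j.-1 k - 2%:R * u i j k) * v i j k)
  = - box_sum Nx Ny Nz 1 0 1 (fun i j k => (u i j.+1 k - u i j k) * (v i j.+1 k - v i j k)).
Proof.
move=> [_ [uy _]]; rewrite !box_sum_ylast -sumrN; apply: eq_big_nat => i ib.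
rewrite -sumrN; apply: eq_big_nat => k kb; have [u0 uN] := uy i k ib kb.
exact: (sum_by_parts_neumann (fun j => v i j k) u0 uN).
Qed.

Lemma box_sum_by_parts_z (u v : gridfun R) : neumann Nx Ny Nz u ->
  box_sum Nx Ny Nz 1 1 1 (fun i j k => (u i j k.+1 + u i j k.-1 - 2%:R * u i j k) * v i j k)
  = - box_sum Nx Ny Nz 1 1 0 (fun i j k => (u i j k.+1 - u i j k) * (v i j k.+1 - v i j k)).
Proof.
move=> [_ [_ uz]]; rewrite /box_sum -sumrN; apply: eq_big_nat => i ib.
rewrite -sumrN; apply: eq_big_nat => j jb; have [u0 uN] := uz i j ib jb.
exact: (sum_by_parts_neumann (fun k => v i j k) u0 uN).
Qed.

Lemma iphE (f f' : gridfun R) :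
  iph Nx Ny Nz h f f' = h ^+ 3 * box_sum Nx Ny Nz 1 1 1 (fun i j k => f i j k * f' i j k).
Proof. by []. Qed.

Lemma ipeE (u v : gridfun R) :
  ipe Nx Ny Nz h u v = h ^+ 3 * h ^- 2 * (
      box_sum Nx Ny Nz 0 1 1 (fun i j k => (u i.+1 j k - u i j k) * (v i.+1 j k - v i j k))
    + box_sum Nx Ny Nz 1 0 1 (fun i j k => (u i j.+1 k - u i j k) * (v i j.+1 k - v i j k))
    + box_sum Nx Ny Nz 1 1 0 (fun i j k => (u i j k.+1 - u i j k) * (v i j k.+1 - v i j k))).
Proof.
rewrite /ipe -mulrA; congr (_ * _); rewrite !mulrDr -!box_sumZ.
by congr (_ + _ + _); apply: eq_box_sum => i j k _ _ _; rewrite /Dx /Dy /Dz -exprVn; ring.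
Qed.

Lemma eq_iphl (f f' g : gridfun R) :
  (forall i j k, (1 <= i <= Nx)%N -> (1 <= j <= Ny)%N -> (1 <= k <= Nz)%N ->
     f i j k = f' i j k) ->
  iph Nx Ny Nz h f g = iph Nx Ny Nz h f' g.
Proof.
by move=> ff'; rewrite !iphE; congr (_ * _); apply: eq_box_sum => i j k *; rewrite ff'.
Qed.

Lemma iphDl (f f' g : gridfun R) :
  iph Nx Ny Nz h (fun i j k => f i j k + f' i j k) g
  = iph Nx Ny Nz h f g + iph Nx Ny Nz h f' g.
Proof.
rewrite !iphE -mulrDr -box_sumD; congr (_ * _).
by apply: eq_box_sum => *; rewrite mulrDl.
Qed.

Lemma iphBl (f f' g : gridfun R) :
  iph Nx Ny Nz h (fun i j k => f i j k - f' i j k) g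
  = iph Nx Ny Nz h f g - iph Nx Ny Nz h f' g.
Proof.
rewrite !iphE -mulrBr -box_sumB; congr (_ * _).
by apply: eq_box_sum => *; rewrite mulrBl.
Qed.

Lemma iphZl (x : R) (f g : gridfun R) :
  iph Nx Ny Nz h (fun i j k => x * f i j k) g = x * iph Nx Ny Nz h f g.
Proof.
rewrite !iphE mulrCA; congr (_ * _).
by rewrite -box_sumZ; apply: eq_box_sum => *; rewrite mulrA.
Qed.

Lemma normh2_ge0 (f : gridfun R) : 0 <= h -> 0 <= normh2 Nx Ny Nz h f.
Proof.
move=> h_ge0; rewrite /normh2 iphE mulr_ge0 ?exprn_ge0 //.
by do 3![apply: sumr_ge0 => ? _]; rewrite -expr2 sqr_ge0.
Qed.

Lemma iph_lapd (u v : gridfun R) : neumann Nx Ny Nz u ->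
  iph Nx Ny Nz h (lapd h u) v = - ipe Nx Ny Nz h u v.
Proof.
move=> u_neumann; rewrite iphE ipeE.
have -> : box_sum Nx Ny Nz 1 1 1 (fun i j k => lapd h u i j k * v i j k) = h ^- 2 * (
      box_sum Nx Ny Nz 1 1 1 (fun i j k => (u i.+1 j k + u i.-1 j k - 2%:R * u i j k) * v i j k)
    + box_sum Nx Ny Nz 1 1 1 (fun i j k => (u i j.+1 k + u i j.-1 k - 2%:R * u i j k) * v i j k)
    + box_sum Nx Ny Nz 1 1 1 (fun i j k => (u i j k.+1 + u i j k.-1 - 2%:R * u i j k) * v i j k)).
  by rewrite -!box_sumD -box_sumZ; apply: eq_box_sum => *; rewrite /lapd; ring.
rewrite box_sum_by_parts_x // box_sum_by_parts_y // box_sum_by_parts_z //; ring.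
Qed.

Lemma ipe_avg_sub (p q : gridfun R) :
  ipe Nx Ny Nz h (fun i j k => (p i j k + q i j k) / 2%:R) (fun i j k => p i j k - q i j k)
  = (normgrad2 Nx Ny Nz h p - normgrad2 Nx Ny Nz h q) / 2%:R.
Proof.
have split3 (x y z x' y' z' : R) :
  (x + y + z - (x' + y' + z')) / 2%:R = (x - x') / 2%:R + (y - y') / 2%:R + (z - z') / 2%:R.
  by ring.
rewrite /normgrad2 !ipeE -mulrBr -[RHS]mulrA split3 -!box_sumB; congr (_ * (_ + _ + _));
  by rewrite [RHS]mulrC -(box_sumZ _ _ _ _ _ _ 2%:R^-1); apply: eq_box_sum => *; ring.
Qed.

Lemma iph_divl (x : R) (f g : gridfun R) :
  iph Nx Ny Nz h (fun i j k => f i j k / x) g = iph Nx Ny Nz h f g / x.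
Proof. by rewrite mulrC -iphZl; apply: eq_iphl => *; rewrite mulrC. Qed.

(* With a = p - n and b = n - m this is (a - b)/2 * a = (a^2 - b^2 + (a - b)^2)/4. *)
Lemma iph_stabilizer (m n p : gridfun R) :
  iph Nx Ny Nz h
    (fun i j k => (p i j k + n i j k) / 2%:R
                  - (3%:R / 2%:R * n i j k - 1 / 2%:R * m i j k))
    (fun i j k => p i j k - n i j k)
  = (normh2 Nx Ny Nz h (fun i j k => p i j k - n i j k)
     - normh2 Nx Ny Nz h (fun i j k => n i j k - m i j k)
     + normh2 Nx Ny Nz h (fun i j k => p i j k - 2%:R * n i j k + m i j k)) / 4%:R.
Proof.
rewrite /normh2 !iphE -!mulrBr -mulrDr -mulrA; congr (_ * _).
rewrite -box_sumB -box_sumD [RHS]mulrC -(box_sumZ _ _ _ _ _ _ 4%:R^-1).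
by apply: eq_box_sum => *; field.
Qed.

Lemma iph_mobility_step (dt : R) (g mu p q : gridfun R) : dt != 0 ->
  (forall i j k, (1 <= i <= Nx)%N -> (1 <= j <= Ny)%N -> (1 <= k <= Nz)%N ->
     0 <= g i j k) ->
  (forall i j k, (1 <= i <= Nx)%N -> (1 <= j <= Ny)%N -> (1 <= k <= Nz)%N ->
     (p i j k - q i j k) / dt = - (g i j k * mu i j k)) ->
  iph Nx Ny Nz h mu (fun i j k => p i j k - q i j k)
  = - (dt * normh2 Nx Ny Nz h (fun i j k => Num.sqrt (g i j k) * mu i j k)).
Proof.
move=> dt_neq0 g_ge0 step; rewrite /normh2 !iphE mulrCA -mulrN; congr (_ * _).
rewrite -mulNr -(box_sumZ _ _ _ _ _ _ (- dt)); apply: eq_box_sum => i j k ib jb kb.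
rewrite -[p i j k - _](mulfVK dt_neq0) step // mulrACA -expr2 sqr_sqrtr ?g_ge0 //.
ring.
Qed.

End GridCalculus.

(* phim = phi^{n-1}, phin = phi^n, phip = phi^{n+1}, mu = mu^{n+1/2},
   Q = Q^{n+1/2}; the index n >= 1 only labels time levels. *)
Theorem mainTheorem2 (R : rcfType) (lx ly lz : R) (Nx Ny Nz : nat) (h : R)
  (eps S dt : R) (g : gridfun R) (phim phin phip mu : gridfun R) (Q : R) :
  0 < lx -> 0 < ly -> 0 < lz ->
  (0 < Nx)%N -> (0 < Ny)%N -> (0 < Nz)%N ->
  h = lx / Nx%:R -> h = ly / Ny%:R -> h = lz / Nz%:R ->
  0 < eps -> 0 < S -> 0 < dt ->
  (forall i j k, (1 <= i <= Nx)%N -> (1 <= j <= Ny)%N -> (1 <= k <= Nz)%N ->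
     0 <= g i j k) ->
  neumann Nx Ny Nz phim -> neumann Nx Ny Nz phin ->
  neumann Nx Ny Nz phip -> neumann Nx Ny Nz mu ->
  let phis : gridfun R :=
    fun i j k => 3%:R / 2%:R * phin i j k - 1 / 2%:R * phim i j k in
  (forall i j k, (1 <= i <= Nx)%N -> (1 <= j <= Ny)%N -> (1 <= k <= Nz)%N ->
     (phip i j k - phin i j k) / dt = - (g i j k * mu i j k)) ->
  (forall i j k, (1 <= i <= Nx)%N -> (1 <= j <= Ny)%N -> (1 <= k <= Nz)%N ->
     mu i j k = Q * (dFdw (phis i j k) / eps ^+ 2)
       - lapd h (fun a b c => (phip a b c + phin a b c) / 2%:R) i j k
       + S * ((phip i j k + phin i j k) / 2%:R - phis i j k)) ->
  iph Nx Ny Nz h (fun i j k => Fdw (phip i j k) - Fdw (phin i j k)) (one_grid R)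
    = Q * iph Nx Ny Nz h (fun i j k => dFdw (phis i j k))
                         (fun i j k => phip i j k - phin i j k) ->
  let lhs :=
    1 / eps ^+ 2 *
      iph Nx Ny Nz h (fun i j k => Fdw (phip i j k) - Fdw (phin i j k)) (one_grid R)
    + 1 / 2%:R * (normgrad2 Nx Ny Nz h phip - normgrad2 Nx Ny Nz h phin)
    + S / 4%:R * (normh2 Nx Ny Nz h (fun i j k => phip i j k - phin i j k)
                  - normh2 Nx Ny Nz h (fun i j k => phin i j k - phim i j k)) in
  let rhs :=
    - (dt * normh2 Nx Ny Nz h (fun i j k => Num.sqrt (g i j k) * mu i j k))
    - S / 4%:R * normh2 Nx Ny Nz h
        (fun i j k => phip i j k - 2%:R * phin i j k + phim i j k) in
  lhs = rhs /\ rhs <= 0 /\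
  Etilde Nx Ny Nz h eps S phip phin <= Etilde Nx Ny Nz h eps S phin phim.
Proof.
move=> lx_gt0 _ _ _ _ _ h_def _ _ _ S_gt0 dt_gt0 g_ge0 _ phin_neumann phip_neumann _
  phis step_phi step_mu step_Q lhs rhs.
have h_ge0 : 0 <= h by rewrite h_def divr_ge0 ?ler0n ?ltW.
have dissipation := iph_mobility_step h (lt0r_neq0 dt_gt0) g_ge0 step_phi.
have tested_mu :
  iph Nx Ny Nz h mu (fun i j k => phip i j k - phin i j k)
  = Q * iph Nx Ny Nz h (fun i j k => dFdw (phis i j k)) (fun i j k => phip i j k - phin i j k)
      / eps ^+ 2
    + (normgrad2 Nx Ny Nz h phip - normgrad2 Nx Ny Nz h phin) / 2%:R
    + S * ((normh2 Nx Ny Nz h (fun i j k => phip i j k - phin i j k)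
            - normh2 Nx Ny Nz h (fun i j k => phin i j k - phim i j k)
            + normh2 Nx Ny Nz h (fun i j k => phip i j k - 2%:R * phin i j k + phim i j k))
           / 4%:R).
  rewrite (eq_iphl _ _ step_mu) iphDl iphBl !iphZl iph_divl iph_lapd; last exact: neumann_avg.
  by rewrite ipe_avg_sub iph_stabilizer opprK mulrA.
have energy_identity : lhs = rhs.
  by rewrite /lhs /rhs step_Q -dissipation tested_mu; ring.
have rhs_le0 : rhs <= 0.
  by rewrite /rhs -opprD oppr_le0 addr_ge0 // mulr_ge0 ?normh2_ge0 ?divr_ge0 ?ler0n // ltW.
split=> //; split=> //.
rewrite -subr_le0 (_ : _ - _ = lhs); first by rewrite energy_identity.
by rewrite /lhs /Etilde iphBl; ring.
Qed.
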